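(* Let $\Re$ be a commutative Krasner hyperring with identity $1\ne0$, $\phi:L(\Re)\to L(\Re)\cup\{\emptyset\}$ a function, and $T$ a proper $\phi$-primary hyperideal of $\Re$. (i) If $M$ is a hyperideal of $\Re$ with $M\subseteq T$, then $T/M$ is a $\phi_M$-primary hyperideal of $\Re/M$. (ii) If $S$ is a multiplicatively closed subset of $\Re$ with $T\cap S=\emptyset$ and $\phi(T)_S\subseteq\phi_S(T_S)$, then $T_S$ is a $\phi_S$-primary hyperideal of $\Re_S$.
   Context: Krasner hyperring: $(\Re,\oplus)$ canonical hypergroup, $(\Re,\circ)$ commutative semigroup with identity $1\ne0$, $0$ absorbing, distributive. For a hyperideal $M$, $\Re/M=\{a\oplus M\}$ is the quotient hyperring, $N/M=\{a\oplus M: a\in N\}$ for $N\supseteq M$, and $\phi_M(N/M)=(\phi(N)\oplus M)/M$ (or $\emptyset$ if $\phi(N)=\emptyset$). For multiplicatively closed $S$, $\Re_S$ is the localization, $N_S=\{a/s:a\in N,s\in S\}$, and for $J\in L(\Re_S)$, $\phi_S(J)=(\phi(J\cap\Re))_S$ where $J\cap\Re=\{a: a/1\in J\}$ ($\emptyset$ if $\phi(J\cap\Re)=\emptyset$). $N$ is $\psi$-primary if $a\circ b\in N$, $a\circ b\notin\psi(N)$ imply $a\in N$ or $b^k\in N$ for some $k\in\mathbb{N}$. *)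

(* Elements of quotient/localized hyperrings are
   genuine equivalence classes (subsets), representatives are picked with
   ClassicalEpsilon (the operations do not depend on the choice). *)
From Stdlib Require Import ClassicalEpsilon Arith.

Set Implicit Arguments.

(* A hyperring signature: carrier, hyperaddition (hadd a b c  <->  c \in a (+) b),
   multiplication, 0, 1, additive inverse. *)
Record hsig := HSig {
  car :> Type;
  hadd : car -> car -> car -> Prop;
  hmul : car -> car -> car;
  hzero : car;
  hone : car;
  hneg : car -> car
}.

Arguments hadd {h}.
Arguments hmul {h}.
Arguments hzero {h}.
Arguments hone {h}.
Arguments hneg {h}.

Record is_krasner (R : hsig) : Prop := {
  hadd_nonempty : forall a b : R, exists c, hadd a b c;
  hadd_assoc : forall a b c x : R,
      (exists y, hadd a b y /\ hadd y c x) <-> (exists y, hadd b c y /\ hadd a y x);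
  hadd_comm : forall a b x : R, hadd a b x <-> hadd b a x;
  hadd_zero : forall a x : R, hadd a hzero x <-> x = a;
  hneg_spec : forall a : R, hadd a (hneg a) hzero;
  hneg_unique : forall a b : R, hadd a b hzero -> b = hneg a;
  hadd_rev : forall a b c : R, hadd a b c -> hadd c (hneg b) a /\ hadd (hneg a) c b;
  hmul_assoc : forall a b c : R, hmul a (hmul b c) = hmul (hmul a b) c;
  hmul_comm : forall a b : R, hmul a b = hmul b a;
  hmul_one : forall a : R, hmul hone a = a;
  hone_neq_zero : (hone : R) <> hzero;
  hmul_zero : forall a : R, hmul hzero a = hzero;
  hmul_distr : forall a b c x : R,
      hadd (hmul a b) (hmul a c) x <-> exists y, hadd b c y /\ x = hmul a y
}.

Section Generic.
Variable R : hsig.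

Definition hyperideal (I : R -> Prop) : Prop :=
  (exists x, I x) /\
  (forall a b x, I a -> I b -> hadd a (hneg b) x -> I x) /\
  (forall r a, I a -> I (hmul r a)).

Definition proper (I : R -> Prop) : Prop := exists x, ~ I x.

Fixpoint hpow (b : R) (k : nat) : R :=
  match k with 0 => hone | S k' => hmul b (hpow b k') end.

(* psi-primary hyperideal; psi : L(R) -> L(R) \cup {emptyset}, the empty set
   being represented by the empty predicate. *)
Definition psi_primary (psi : (R -> Prop) -> (R -> Prop)) (N : R -> Prop) : Prop :=
  hyperideal N /\
  forall a b : R, N (hmul a b) -> ~ psi N (hmul a b) ->
    N a \/ exists k, 0 < k /\ N (hpow b k).

Definition setadd (A B : R -> Prop) : R -> Prop :=
  fun x => exists a b, A a /\ B b /\ hadd a b x.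

Definition phi_fun (phi : (R -> Prop) -> (R -> Prop)) : Prop :=
  forall N, hyperideal N -> hyperideal (phi N) \/ (forall x, ~ phi N x).

End Generic.

Section Quotient.
Variables (R : hsig) (M : R -> Prop).

Definition coset (a : R) : R -> Prop := fun x => exists m, M m /\ hadd a m x.

Definition qcar : Type := {X : R -> Prop | exists a, X = coset a}.

Definition qmk (a : R) : qcar := exist _ (coset a) (ex_intro _ a eq_refl).

Definition qrep (X : qcar) : R :=
  proj1_sig (constructive_indefinite_description _ (proj2_sig X)).

Definition quot : hsig :=
  @HSig qcar
    (fun X Y Z => exists c, hadd (qrep X) (qrep Y) c /\ Z = qmk c)
    (fun X Y => qmk (hmul (qrep X) (qrep Y)))
    (qmk hzero) (qmk hone) (fun X => qmk (hneg (qrep X))).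

Definition qset (N : R -> Prop) : quot -> Prop := fun X => exists a, N a /\ X = qmk a.

(* phi_M (N/M) = (phi(N) (+) M)/M; for J in L(R/M), J = N/M with
   N = {a | a (+) M in J}. *)
Definition phiM (phi : (R -> Prop) -> (R -> Prop)) (J : quot -> Prop) : quot -> Prop :=
  qset (@setadd R (phi (fun a => J (qmk a))) M).

End Quotient.

Record mclosed (R : hsig) := MClosed {
  mset :> R -> Prop;
  mset_one : mset hone;
  mset_mul : forall s t, mset s -> mset t -> mset (hmul s t)
}.

Section Localization.
Variables (R : hsig) (S : mclosed R).

Definition lcls (a s : R) : R * R -> Prop :=
  fun p => S (snd p) /\ exists u, S u /\ hmul u (hmul a (snd p)) = hmul u (hmul (fst p) s).

Definition lcar : Type :=
  {X : R * R -> Prop | exists p : R * R, S (snd p) /\ X = lcls (fst p) (snd p)}.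

Definition lmk (a s : R) (Hs : S s) : lcar :=
  exist _ (lcls a s) (ex_intro _ (a, s) (conj Hs eq_refl)).

Definition lrep (X : lcar) :=
  constructive_indefinite_description _ (proj2_sig X).

Definition lnum (X : lcar) : R := fst (proj1_sig (lrep X)).
Definition lden (X : lcar) : R := snd (proj1_sig (lrep X)).
Definition lden_in (X : lcar) : S (lden X) := proj1 (proj2_sig (lrep X)).

Definition loc : hsig :=
  @HSig lcar
    (fun X Y Z => exists c, hadd (hmul (lnum X) (lden Y)) (hmul (lnum Y) (lden X)) c /\
                  Z = lmk c _ (mset_mul S _ _ (lden_in X) (lden_in Y)))
    (fun X Y => lmk (hmul (lnum X) (lnum Y)) _ (mset_mul S _ _ (lden_in X) (lden_in Y)))
    (lmk hzero _ (mset_one S)) (lmk hone _ (mset_one S))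
    (fun X => lmk (hneg (lnum X)) _ (lden_in X)).

Definition lset (N : R -> Prop) : loc -> Prop :=
  fun X => exists a s (Hs : S s), N a /\ X = lmk a s Hs.

Definition lcontr (J : loc -> Prop) : R -> Prop := fun a => J (lmk a _ (mset_one S)).

Definition phiS (phi : (R -> Prop) -> (R -> Prop)) (J : loc -> Prop) : loc -> Prop :=
  lset (phi (lcontr J)).

End Localization.

(* Both parts transport the ψ-primary condition along the canonical map.
   In R/M, the hyperideal T ⊇ M is a union of M-cosets, so a + M ∈ T/M iff
   a ∈ T; a product of classes is the class of the product of representatives,
   and a representative of ȳ^k lies in y^k + M.  Hence x̄ȳ ∈ T/M \ φ_M(T/M)
   forces xy ∈ T \ φ(T), and primality of T transfers.
   In R_S, a/s ∈ T_S iff ua ∈ T for some u ∈ S.  If (a/s)(b/t) ∈ T_S, pick u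
   with a(ub) ∈ T.  Were a(ub) ∈ φ(T), then ab/st = a(ub)/(ust) would lie in
   φ(T)_S ⊆ φ_S(T_S); otherwise a ∈ T or (ub)^k = u^k b^k ∈ T, i.e.
   a/s ∈ T_S or (b/t)^k ∈ T_S. *)
From Stdlib Require Import ClassicalEpsilon Arith List Permutation
  FunctionalExtensionality PropExtensionality ProofIrrelevance.
Import ListNotations.
Set Implicit Arguments.

Inductive mterm (A : Type) : Type :=
  | MAtom (x : A)
  | MOne
  | MMul (s t : mterm A).
Arguments MAtom {A}.
Arguments MOne {A}.
Arguments MMul {A}.

Section MulAC.
Variables (R : hsig) (HR : is_krasner R).

Fixpoint mterm_eval (t : mterm R) : R :=
  match t with
  | MAtom x => x
  | MOne => hone
  | MMul s t => hmul (mterm_eval s) (mterm_eval t)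
  end.

Fixpoint mterm_atoms (t : mterm R) : list R :=
  match t with
  | MAtom x => [x]
  | MOne => []
  | MMul s t => mterm_atoms s ++ mterm_atoms t
  end.

Definition hprod (l : list R) : R := fold_right hmul hone l.

Lemma hprod_app l1 l2 : hprod (l1 ++ l2) = hmul (hprod l1) (hprod l2).
Proof.
  induction l1 as [|x l IH]; simpl.
  - now rewrite (hmul_one HR).
  - now rewrite IH, (hmul_assoc HR).
Qed.

Lemma hprod_perm l1 l2 : Permutation l1 l2 -> hprod l1 = hprod l2.
Proof.
  induction 1; simpl; try congruence.
  now rewrite !(hmul_assoc HR), (hmul_comm HR y x).
Qed.

Lemma mterm_eval_hprod t : mterm_eval t = hprod (mterm_atoms t).
Proof.
  induction t as [x| |s IHs t IHt]; simpl.
  - now rewrite (hmul_comm HR), (hmul_one HR).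
  - reflexivity.
  - now rewrite hprod_app, IHs, IHt.
Qed.

Lemma mterm_eval_perm s t :
  Permutation (mterm_atoms s) (mterm_atoms t) -> mterm_eval s = mterm_eval t.
Proof. rewrite !mterm_eval_hprod. apply hprod_perm. Qed.

End MulAC.

Ltac reify_hmul R e :=
  lazymatch e with
  | hmul ?a ?b =>
      let ta := reify_hmul R a in let tb := reify_hmul R b in constr:(MMul ta tb)
  | hone => constr:(@MOne R)
  | _ => constr:(@MAtom R e)
  end.

Ltac split_at x l :=
  lazymatch l with
  | x :: ?t => let A := type of x in constr:((@nil A, t))
  | ?h :: ?t =>
      let p := split_at x t in
      lazymatch p with (?l1, ?l2) => constr:((h :: l1, l2)) end
  end.

Ltac solve_perm :=
  lazymatch goal with
  | |- Permutation [] [] => apply perm_nil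
  | |- Permutation (?x :: ?l) ?r =>
      let p := split_at x r in
      lazymatch p with (?l1, ?l2) =>
        change (Permutation (x :: l) (l1 ++ x :: l2));
        apply Permutation_cons_app; cbn [app]; solve_perm
      end
  end.

Ltac hmul_ac :=
  lazymatch goal with
  | HR : is_krasner ?R |- ?l = ?r =>
      let tl := reify_hmul R l in
      let tr := reify_hmul R r in
      change (@mterm_eval R tl = @mterm_eval R tr);
      apply (mterm_eval_perm HR); cbn [mterm_atoms app]; solve_perm
  end.

Lemma hyperideal_intro (R : hsig) (I : R -> Prop) :
  (exists x, I x) ->
  (forall a, I a -> I (hneg a)) ->
  (forall a b x, I a -> I b -> hadd a b x -> I x) ->
  (forall r a, I a -> I (hmul r a)) ->
  hyperideal R I.
Proof.
  intros Hne Hneg Hadd Hmul. split; [exact Hne | split; [|exact Hmul]].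
  intros a b x Ha Hb. apply Hadd; auto.
Qed.

Section Krasner.
Variables (R : hsig) (HR : is_krasner R).

Lemma hadd_0_l (a : R) : hadd hzero a a.
Proof. apply (hadd_comm HR), (hadd_zero HR); reflexivity. Qed.

Lemma hadd_0_r (a : R) : hadd a hzero a.
Proof. apply (hadd_zero HR); reflexivity. Qed.

Lemma hmul_0_r (a : R) : hmul a hzero = hzero.
Proof. now rewrite (hmul_comm HR), (hmul_zero HR). Qed.

Lemma hadd_hmul_l (a : R) {b c x : R} :
  hadd b c x -> hadd (hmul a b) (hmul a c) (hmul a x).
Proof. intro H. apply (hmul_distr HR). eauto. Qed.

Lemma hmul_neg_r (a b : R) : hmul a (hneg b) = hneg (hmul a b).
Proof.
  apply (hneg_unique HR). rewrite <- (hmul_0_r a).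
  apply hadd_hmul_l, (hneg_spec HR).
Qed.

Lemma hneg_involutive (a : R) : hneg (hneg a) = a.
Proof. symmetry. apply (hneg_unique HR), (hadd_comm HR), (hneg_spec HR). Qed.

Lemma hpow_hmul (a b : R) k : hpow R (hmul a b) k = hmul (hpow R a k) (hpow R b k).
Proof.
  induction k as [|k IH]; simpl.
  - now rewrite (hmul_one HR).
  - rewrite IH. hmul_ac.
Qed.

Section Hyperideal.
Variables (I : R -> Prop) (HI : hyperideal R I).

Lemma hyperideal_0 : I hzero.
Proof.
  destruct HI as [[x Hx] [Hsub _]]. apply (Hsub x x); auto. apply (hneg_spec HR).
Qed.

Lemma hyperideal_neg {a} : I a -> I (hneg a).
Proof.
  intro Ha. destruct HI as [_ [Hsub _]].
  apply (Hsub hzero a); [apply hyperideal_0 | exact Ha | apply hadd_0_l].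
Qed.

Lemma hyperideal_add {a b x} : I a -> I b -> hadd a b x -> I x.
Proof.
  intros Ha Hb H. destruct HI as [_ [Hsub _]].
  apply (Hsub a (hneg b)); [exact Ha | apply hyperideal_neg, Hb |].
  now rewrite hneg_involutive.
Qed.

Lemma hyperideal_mul_l r {a} : I a -> I (hmul r a).
Proof. destruct HI as [_ [_ Hmul]]. auto. Qed.

End Hyperideal.

Section Coset.
Variables (M : R -> Prop) (HM : hyperideal R M).

Lemma coset_refl a : coset R M a a.
Proof. exists hzero. split; [apply hyperideal_0, HM | apply hadd_0_r]. Qed.

Lemma coset_trans a b c : coset R M a b -> coset R M b c -> coset R M a c.
Proof.
  intros [m [Hm Hb]] [m' [Hm' Hc]].
  destruct (proj1 (hadd_assoc HR a m m' c) (ex_intro _ b (conj Hb Hc)))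
    as [w [Hw Hc']].
  exists w. split; [exact (hyperideal_add HM Hm Hm' Hw) | exact Hc'].
Qed.

Lemma coset_hmul_l r a b : coset R M a b -> coset R M (hmul r a) (hmul r b).
Proof.
  intros [m [Hm Hb]]. exists (hmul r m).
  split; [apply hyperideal_mul_l; assumption | apply hadd_hmul_l, Hb].
Qed.

Lemma coset_mem {N a b} :
  hyperideal R N -> (forall x, M x -> N x) -> coset R M a b -> N a -> N b.
Proof.
  intros HN HMN [m [Hm Hb]] Ha. exact (hyperideal_add HN Ha (HMN m Hm) Hb).
Qed.

End Coset.
End Krasner.

Section Quotient.
Variables (R : hsig) (HR : is_krasner R) (M : R -> Prop) (HM : hyperideal R M).

Lemma qmk_qrep (Z : quot R M) : qmk R M (qrep Z) = Z.
Proof.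
  destruct Z as [X HX]. unfold qrep; simpl.
  destruct (constructive_indefinite_description _ HX) as [c ->]; simpl.
  unfold qmk. f_equal. apply proof_irrelevance.
Qed.

Lemma coset_of_qmk_eq a b : qmk R M a = qmk R M b -> coset R M a b.
Proof.
  intro E. apply (f_equal (@proj1_sig _ _)) in E. simpl in E.
  rewrite E. apply coset_refl; assumption.
Qed.

Lemma coset_qrep_qmk a : coset R M a (qrep (qmk R M a)).
Proof. apply coset_of_qmk_eq. symmetry. apply qmk_qrep. Qed.

Lemma qrep_hpow (Y : quot R M) k :
  coset R M (hpow R (qrep Y) k) (qrep (hpow (quot R M) Y k)).
Proof.
  induction k as [|k IH].
  - exact (coset_qrep_qmk hone).
  - apply (coset_trans HR HM) with (hmul (qrep Y) (qrep (hpow (quot R M) Y k))).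
    + apply coset_hmul_l; assumption.
    + apply coset_qrep_qmk.
Qed.

Variables (N : R -> Prop) (HN : hyperideal R N) (HMN : forall x, M x -> N x).

Lemma qset_qmk a : qset (M := M) N (qmk R M a) <-> N a.
Proof.
  split.
  - intros [b [Hb E]]. apply (coset_mem HR HN HMN (coset_of_qmk_eq (eq_sym E)) Hb).
  - intro Ha. exists a. auto.
Qed.

Lemma qset_qrep (Z : quot R M) : qset N Z <-> N (qrep Z).
Proof. rewrite <- (qmk_qrep Z) at 1. apply qset_qmk. Qed.

Lemma qset_hyperideal : hyperideal (quot R M) (qset N).
Proof.
  apply hyperideal_intro.
  - destruct HN as [[a Ha] _]. exists (qmk R M a). now apply qset_qmk.
  - intros A HA. apply qset_qmk, (hyperideal_neg HR HN), qset_qrep, HA.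
  - intros A B Z HA HB [c [Hc ->]]. apply qset_qmk.
    apply qset_qrep in HA, HB. exact (hyperideal_add HR HN HA HB Hc).
  - intros r A HA. apply qset_qmk, hyperideal_mul_l, qset_qrep; assumption.
Qed.

Lemma phiM_qset phi {a} : phi N a -> phiM phi (qset N) (qmk R M a).
Proof.
  intro Ha. unfold phiM.
  replace (fun x => qset (M := M) N (qmk R M x)) with N
    by (extensionality x; apply propositional_extensionality; symmetry; apply qset_qmk).
  exists a. split; [|reflexivity].
  exists a, hzero. split; [exact Ha | split; [apply (hyperideal_0 HR HM) | apply hadd_0_r, HR]].
Qed.

Lemma qset_psi_primary phi :
  psi_primary R phi N -> psi_primary (quot R M) (phiM phi) (qset N).
Proof.
  intros [_ Hprim]. split; [exact qset_hyperideal|].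
  intros X Y HXY Hphi.
  apply (qset_qmk (hmul (qrep X) (qrep Y))) in HXY.
  assert (Hn : ~ phi N (hmul (qrep X) (qrep Y)))
    by (intro Hp; exact (Hphi (phiM_qset phi Hp))).
  destruct (Hprim _ _ HXY Hn) as [Hx | [k [Hk Hy]]].
  - left. now apply qset_qrep.
  - right. exists k. split; [exact Hk|].
    apply qset_qrep. exact (coset_mem HR HN HMN (qrep_hpow Y k) Hy).
Qed.

End Quotient.

Section Localization.
Variables (R : hsig) (HR : is_krasner R) (S : mclosed R).

(* [lcls S a s (b, t)] unfolds to [S t /\ lequiv a s b t]. *)
Definition lequiv (a s b t : R) : Prop :=
  exists u, S u /\ hmul u (hmul a t) = hmul u (hmul b s).

Lemma lequiv_refl a s : lequiv a s a s.
Proof. exists hone. split; [apply mset_one | reflexivity]. Qed.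

Lemma lequiv_sym a s b t : lequiv a s b t -> lequiv b t a s.
Proof. intros [u [Hu E]]. exists u. auto. Qed.

Lemma lequiv_trans a s b t c r : S t -> lequiv a s b t -> lequiv b t c r -> lequiv a s c r.
Proof.
  intros Ht [u [Hu E1]] [v [Hv E2]].
  exists (hmul u (hmul v t)). split; [repeat apply mset_mul; assumption|].
  transitivity (hmul (hmul v r) (hmul u (hmul a t))); [hmul_ac|]. rewrite E1.
  transitivity (hmul (hmul u s) (hmul v (hmul b r))); [hmul_ac|]. rewrite E2.
  hmul_ac.
Qed.

Lemma lequiv_mul a s a' s' b t b' t' :
  lequiv a s a' s' -> lequiv b t b' t' ->
  lequiv (hmul a b) (hmul s t) (hmul a' b') (hmul s' t').
Proof.
  intros [u [Hu E1]] [v [Hv E2]]. exists (hmul u v). split; [apply mset_mul; assumption|].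
  transitivity (hmul (hmul u (hmul a s')) (hmul v (hmul b t'))); [hmul_ac|].
  rewrite E1, E2. hmul_ac.
Qed.

Lemma mset_hpow {u} k : S u -> S (hpow R u k).
Proof. intro Hu. induction k; simpl; [apply mset_one | apply mset_mul; assumption]. Qed.

Lemma lmk_eq a s b t Hs Ht : lequiv a s b t -> lmk S a s Hs = lmk S b t Ht.
Proof.
  intro H. apply eq_sig_hprop; [intros; apply proof_irrelevance|]. simpl.
  extensionality p. apply propositional_extensionality. unfold lcls.
  split; intros [Hp Hrel]; split; auto.
  - exact (lequiv_trans Hs (lequiv_sym H) Hrel).
  - exact (lequiv_trans Ht H Hrel).
Qed.

Lemma lmk_inj a s b t Hs Ht : lmk S a s Hs = lmk S b t Ht -> lequiv a s b t.
Proof.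
  intro E. apply (f_equal (@proj1_sig _ _)) in E. simpl in E.
  assert (Hb : lcls S b t (b, t)) by (split; [exact Ht | apply lequiv_refl]).
  rewrite <- E in Hb. exact (proj2 Hb).
Qed.

Lemma lmk_scale u a s Hs Hus : S u -> lmk S (hmul u a) (hmul u s) Hus = lmk S a s Hs.
Proof. intro Hu. apply lmk_eq. exists hone. split; [apply mset_one | hmul_ac]. Qed.

Lemma lmk_lnum_lden (X : loc S) : lmk S (lnum X) (lden X) (lden_in X) = X.
Proof.
  destruct X as [X HX]. unfold lnum, lden, lden_in, lrep; simpl.
  destruct (constructive_indefinite_description _ HX) as [[a s] [Hs E]]; simpl.
  apply eq_sig_hprop; [intros; apply proof_irrelevance|]. simpl. now rewrite E.
Qed.

Lemma lmk_surj (X : loc S) : exists a s Hs, X = lmk S a s Hs.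
Proof. exists (lnum X), (lden X), (lden_in X). symmetry. apply lmk_lnum_lden. Qed.

Lemma lmk_hmul a s b t Hs Ht :
  @hmul (loc S) (lmk S a s Hs) (lmk S b t Ht) = lmk S (hmul a b) (hmul s t) (mset_mul S _ _ Hs Ht).
Proof.
  apply lmk_eq, lequiv_sym, lequiv_mul.
  - eapply lmk_inj. symmetry. apply lmk_lnum_lden.
  - eapply lmk_inj. symmetry. apply lmk_lnum_lden.
Qed.

Lemma lmk_hpow a s Hs k :
  hpow (loc S) (lmk S a s Hs) k = lmk S (hpow R a k) (hpow R s k) (mset_hpow k Hs).
Proof.
  induction k as [|k IH]; [apply lmk_eq, lequiv_refl|].
  cbn [hpow]. rewrite IH, lmk_hmul. apply lmk_eq, lequiv_refl.
Qed.

Variables (N : R -> Prop) (HN : hyperideal R N).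

Lemma lset_lmk a s Hs : lset N (lmk S a s Hs) <-> exists u, S u /\ N (hmul u a).
Proof.
  split.
  - intros [b [t [Ht [Hb E]]]]. destruct (lmk_inj E) as [w [Hw Ew]].
    exists (hmul w t). split; [apply mset_mul; assumption|].
    replace (hmul (hmul w t) a) with (hmul (hmul w s) b)
      by (transitivity (hmul w (hmul b s)); [hmul_ac | rewrite <- Ew; hmul_ac]).
    apply (hyperideal_mul_l HN), Hb.
  - intros [u [Hu Ha]]. exists (hmul u a), (hmul u s), (mset_mul S _ _ Hu Hs).
    split; [exact Ha|]. symmetry. apply lmk_scale, Hu.
Qed.

Lemma lset_lnum (X : loc S) : lset N X <-> exists u, S u /\ N (hmul u (lnum X)).
Proof. rewrite <- (lmk_lnum_lden X) at 1. apply lset_lmk. Qed.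

Lemma lset_hyperideal : hyperideal (loc S) (lset N).
Proof.
  apply hyperideal_intro.
  - destruct HN as [[a Ha] _]. exists (lmk S a hone (mset_one S)).
    exists a, hone, (mset_one S). auto.
  - intros Y HY. apply lset_lnum in HY as [v [Hv Hy]].
    change (lset N (lmk S (hneg (lnum Y)) (lden Y) (lden_in Y))).
    apply lset_lmk. exists v. split; [exact Hv|].
    rewrite (hmul_neg_r HR). apply (hyperideal_neg HR HN), Hy.
  - intros X Y Z HX HY [c [Hc ->]].
    apply lset_lnum in HX as [u [Hu Hx]], HY as [v [Hv Hy]].
    apply lset_lmk. exists (hmul u v). split; [apply mset_mul; assumption|].
    refine (hyperideal_add HR HN _ _ (hadd_hmul_l HR (hmul u v) Hc)).
    + replace (hmul (hmul u v) (hmul (lnum X) (lden Y)))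
        with (hmul (hmul v (lden Y)) (hmul u (lnum X))) by hmul_ac.
      apply (hyperideal_mul_l HN), Hx.
    + replace (hmul (hmul u v) (hmul (lnum Y) (lden X)))
        with (hmul (hmul u (lden X)) (hmul v (lnum Y))) by hmul_ac.
      apply (hyperideal_mul_l HN), Hy.
  - intros r A HA. apply lset_lnum in HA as [u [Hu Ha]].
    change (lset N (lmk S (hmul (lnum r) (lnum A)) _ (mset_mul S _ _ (lden_in r) (lden_in A)))).
    apply lset_lmk. exists u. split; [exact Hu|].
    replace (hmul u (hmul (lnum r) (lnum A))) with (hmul (lnum r) (hmul u (lnum A))) by hmul_ac.
    apply (hyperideal_mul_l HN), Ha.
Qed.

Lemma lset_psi_primary phi :
  psi_primary R phi N ->
  (forall X, lset (S := S) (phi N) X -> phiS phi (lset N) X) ->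
  psi_primary (loc S) (phiS phi) (lset N).
Proof.
  intros [_ Hprim] Hsub. split; [exact lset_hyperideal|].
  intros X Y HXY Hphi.
  destruct (lmk_surj X) as [a [s [Hs ->]]], (lmk_surj Y) as [b [t [Ht ->]]].
  rewrite lmk_hmul in HXY, Hphi.
  apply lset_lmk in HXY as [u [Hu Hab]].
  replace (hmul u (hmul a b)) with (hmul a (hmul u b)) in Hab by hmul_ac.
  assert (Hn : ~ phi N (hmul a (hmul u b))).
  { intro Hp. apply Hphi, Hsub.
    exists (hmul a (hmul u b)), (hmul u (hmul s t)), (mset_mul S _ _ Hu (mset_mul S _ _ Hs Ht)).
    split; [exact Hp|].
    apply lmk_eq. exists hone. split; [apply mset_one | hmul_ac]. }
  destruct (Hprim _ _ Hab Hn) as [Ha | [k [Hk Hb]]].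
  - left. apply lset_lmk. exists hone. split; [apply mset_one | now rewrite (hmul_one HR)].
  - right. exists k. split; [exact Hk|].
    rewrite lmk_hpow. apply lset_lmk. exists (hpow R u k).
    split; [apply mset_hpow, Hu | now rewrite <- (hpow_hmul HR)].
Qed.

End Localization.

(* [HTp] and T ∩ S = ∅ would only make T/M and T_S proper, which
   [psi_primary] does not require. *)
Theorem mainTheorem14 (R : hsig) (HR : is_krasner R)
  (phi : (R -> Prop) -> (R -> Prop)) (Hphi : phi_fun R phi)
  (T : R -> Prop) (HTp : proper R T) (HT : psi_primary R phi T) :
  (forall M : R -> Prop, hyperideal R M -> (forall x, M x -> T x) ->
     psi_primary (quot R M) (@phiM R M phi) (@qset R M T)) /\
  (forall S : mclosed R, (forall x, ~ (T x /\ S x)) ->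
     (forall X, @lset R S (phi T) X -> @phiS R S phi (@lset R S T) X) ->
     psi_primary (loc S) (@phiS R S phi) (@lset R S T)).
Proof.
  split.
  - intros M HM HMT. exact (qset_psi_primary HR HM (proj1 HT) HMT HT).
  - intros S _ Hsub. exact (lset_psi_primary HR (proj1 HT) HT Hsub).
Qed.
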